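(* Let $$\tau_1(x)=\begin{cases}\tfrac43x,&0\le x<\tfrac3{20},\\ 16x-\tfrac{11}5,&\tfrac3{20}\le x<\tfrac15,\\ 5x \pmod 1,&\tfrac15\le x\le1,\end{cases}\qquad \tau_2(x)=\begin{cases}16x,&0\le x<\tfrac1{20},\\ \tfrac43x+\tfrac{11}{15},&\tfrac1{20}\le x<\tfrac15,\\ 5x\pmod 1,&\tfrac15\le x\le1.\end{cases}$$ The map $\tau(x)=5x \pmod 1$ satisfies $\tau_1\le\tau\le\tau_2$ and preserves Lebesgue measure. However, there is no Borel measurable function $p:[0,1]\to[0,1]$ such that the position dependent random map $T=(\tau_1,\tau_2;p,1-p)$ preserves Lebesgue measure.
   Context: A position dependent random map $T=(\tau_1,\tau_2;p,1-p)$ with measurable $p:[0,1]\to[0,1]$ moves a point $x$ to $\tau_1(x)$ with probability $p(x)$ and to $\tau_2(x)$ with probability $1-p(x)$. It preserves a probability measure $\mu$ if $\mu(A)=\int\big(p(x)\chi_A(\tau_1(x))+(1-p(x))\chi_A(\tau_2(x))\big)\,d\mu(x)$ for every Borel $A\subseteq[0,1]$; for $\mu$ with density $f$ this is equivalent to $P_{\tau_1}(pf)+P_{\tau_2}((1-p)f)=f$, where $P_{\tau_k}$ is the Frobenius–Perron operator of $\tau_k$. *)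

(* R : realType, Borel sets = the canonical
   measurable sets of R, Lebesgue measure = lebesgue_measure. *)
From HB Require Import structures.
From mathcomp Require Import all_boot all_order all_algebra.
From mathcomp Require Import all_classical all_reals all_analysis.
Set Implicit Arguments. Unset Strict Implicit. Unset Printing Implicit Defensive.
Import Order.TTheory GRing.Theory Num.Theory.
Import numFieldNormedType.Exports.
Local Open Scope classical_set_scope.
Local Open Scope ring_scope.

Section Maps.
Variable R : realType.

Definition tau5 (x : R) : R := 5 * x - (Num.floor (5 * x))%:~R.

Definition tau1 (x : R) : R :=
  if x < 3 / 20 then 4 / 3 * x
  else if x < 1 / 5 then 16 * x - 11 / 5
  else tau5 x.

Definition tau2 (x : R) : R :=
  if x < 1 / 20 then 16 * x
  else if x < 1 / 5 then 4 / 3 * x + 11 / 15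
  else tau5 x.

Definition preserves_leb (t : R -> R) : Prop :=
  forall A : set R, measurable A -> A `<=` `[0, 1] ->
    lebesgue_measure (`[0, 1] `&` t @^-1` A) = lebesgue_measure A.

Definition random_map_preserves_leb (t1 t2 p : R -> R) : Prop :=
  forall A : set R, measurable A -> A `<=` `[0, 1] ->
    lebesgue_measure A =
    (\int[lebesgue_measure]_(x in `[0%R, 1%R])
       (p x * \1_A (t1 x) + (1 - p x) * \1_A (t2 x))%:E)%E.

End Maps.

From HB Require Import structures.
From mathcomp Require Import all_boot all_order all_algebra.
From mathcomp Require Import all_classical all_reals all_analysis measurable_realfun.
From mathcomp Require Import ring lra.
Set Implicit Arguments. Unset Strict Implicit. Unset Printing Implicit Defensive.
Import Order.TTheory GRing.Theory Num.Theory.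
Local Open Scope classical_set_scope.
Local Open Scope ring_scope.

(* The preimage of A under x |-> n x mod 1 is the disjoint union of the n
   affine copies (A + k) / n, up to the point 1, hence has the measure of A.

   Both maps send a point to the target A = [1/5, 4/5], of measure 3/5, only
   from a set of measure at most 111/200: on [1/5, 1] they agree with 5x mod 1,
   whose preimage of A has measure 3/5 but only 12/25 of it beyond 1/5, and on
   [0, 1/5) the branches 16x and 16x - 11/5 hit A on two intervals of length
   3/80, the branch 4x/3 never does and 4x/3 + 11/15 only at x = 1/20.
   The integrand in the invariance equation is a convex combination of
   indicators of A, hence below the indicator of that set whatever p is, so
   the equation fails for A. *)

Section random_map_integral.
Context d (T : measurableType d) (R : realType).
Variable mu : {measure set T -> \bar R}.

Lemma ge0_le_integral_nonmeasurable (D : set T) (f1 f2 : T -> \bar R) :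
  (forall x, D x -> 0 <= f1 x)%E -> (forall x, D x -> f1 x <= f2 x)%E ->
  (\int[mu]_(x in D) f1 x <= \int[mu]_(x in D) f2 x)%E.
Proof.
move=> f10 f12.
have f20 x : D x -> (0 <= f2 x)%E.
  by move=> Dx; exact: le_trans (f10 _ Dx) (f12 _ Dx).
rewrite !ge0_integralE //; apply: ge_ereal_sup => _ [h /= hf1 <-].
apply: ereal_sup_ubound; exists h => //= x; apply: le_trans (hf1 x) _.
by rewrite /patch; case: ifPn => // /set_mem /f12.
Qed.

Lemma convex_indic_le (U : Type) (A : set U) (C : set T) (p : R) u v x :
  0 <= p <= 1 -> (A u \/ A v -> C x) ->
  p * \1_A u + (1 - p) * \1_A v <= \1_C x.
Proof.
move=> /andP[p0 p1] AC; rewrite !indicE.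
have [Cx|nCx] := boolP (x \in C).
  by case: (u \in A); case: (v \in A); rewrite /= ?mulr1 ?mulr0; lra.
have nAu : u \notin A.
  by apply: contra nCx => /set_mem Au; apply/mem_set/AC; left.
have nAv : v \notin A.
  by apply: contra nCx => /set_mem Av; apply/mem_set/AC; right.
by rewrite (negbTE nAu) (negbTE nAv) !mulr0 addr0.
Qed.

Lemma random_map_integral_le_measure (U : Type) (D C : set T) (A : set U)
    (t1 t2 : T -> U) (p : T -> R) :
  measurable D -> measurable C -> (forall x, D x -> 0 <= p x <= 1) ->
  (forall x, D x -> A (t1 x) \/ A (t2 x) -> C x) ->
  (\int[mu]_(x in D) (p x * \1_A (t1 x) + (1 - p x) * \1_A (t2 x))%:E
    <= mu C)%E.
Proof.
move=> mD mC p01 hit.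
apply: (@le_trans _ _ (\int[mu]_(x in D) (\1_C x)%:E)%E).
  apply: ge0_le_integral_nonmeasurable => x Dx; rewrite lee_fin.
    have /andP[p0 p1] := p01 x Dx.
    by rewrite !indicE; case: (t1 x \in A); case: (t2 x \in A);
      rewrite /= ?mulr1 ?mulr0; lra.
  exact: convex_indic_le (p01 x Dx) (hit x Dx).
rewrite integral_indic //; apply: le_measure; rewrite ?inE //.
exact: measurableI.
Qed.
End random_map_integral.

Section lebesgue_measure_preimage.
Variable R : realType.
Local Notation mu := (@lebesgue_measure R).

Lemma lebesgue_measure_preimage_affine (a b : R) (A : set R) : 0 < a ->
  measurable A ->
  mu ((fun x => a * x + b) @^-1` A) = ((a^-1)%:E * mu A)%E.
Proof.
move=> a0 mA.
pose f : measurableTypeR R -> measurableTypeR R := fun x => a * x + b.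
have mf : measurable_fun setT f.
  by apply: measurable_funD => //; apply: measurable_funM.
(* The measure instance of [pushforward mu f] depends on [mf], so it cannot be
   inferred and is named explicitly. *)
pose nu := mscale (NngNum (ltW a0))
  (measure_function_pushforward__canonical__measure_function_Measure mu mf).
have -> : mu A = nu A.
  apply: lebesgue_measure_unique mA => _ [[c d] _ <-] /=.
  rewrite /nu /mscale /= /pushforward.
  have -> : f @^-1` `]c, d]%classic = `](c - b) / a, (d - b) / a]%classic.
    apply/seteqP; split => x; rewrite /= !in_itv /= /f => /andP[h1 h2];
      apply/andP; split.
    - by rewrite ltr_pdivrMr //; lra.
    - by rewrite ler_pdivlMr //; lra.
    - by move: h1; rewrite ltr_pdivrMr //; lra.
    - by move: h2; rewrite ler_pdivlMr //; lra.
  rewrite !lebesgue_measure_itv /= !lte_fin ltr_pM2r ?invr_gt0 // ltrD2r.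
  case: ifP => _; last by rewrite mule0.
  by rewrite -!EFinD -EFinM; congr (_%:E); field; exact: lt0r_neq0.
by rewrite /nu /mscale /= muleA -EFinM mulVf ?mul1e // lt0r_neq0.
Qed.

Lemma lebesgue_measure_subU1 (X Y : set R) (a : R) : measurable Y ->
  Y `<=` X -> X `<=` Y `|` [set a] -> measurable X /\ mu X = mu Y.
Proof.
move=> mY YX XYa.
have -> : X = Y `|` (X `&` [set a]).
  apply/seteqP; split => [x Xx|x [/YX //|[] //]].
  by case: (XYa x Xx) => [Yx|xa]; [left|right].
have [->|->] := subset_set1 (@subIsetr _ X [set a]).
  by rewrite setU0.
split; first exact: measurableU.
by rewrite measureU0 //; exact: lebesgue_measure_set1.
Qed.
End lebesgue_measure_preimage.

Definition mulmod1 {R : realType} (n : nat) (x : R) : R :=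
  n%:R * x - (Num.floor (n%:R * x))%:~R.

Section mulmod1.
Variables (R : realType) (n : nat).
Local Notation mu := (@lebesgue_measure R).

Lemma mulmod1_ge0_lt1 (x : R) : 0 <= mulmod1 n x < 1.
Proof.
rewrite /mulmod1; have /andP[h1 h2] := floor_itv (n%:R * x).
by rewrite intrD in h2; apply/andP; split; lra.
Qed.

Lemma mulmod1E (k : nat) (x : R) :
  k%:R <= n%:R * x < k%:R + 1 -> mulmod1 n x = n%:R * x - k%:R.
Proof.
by move=> h; rewrite /mulmod1 (@floor_def _ _ k%:Z) // intrD /= !pmulrn.
Qed.

Hypothesis n_gt0 : (0 < n)%N.

Lemma mulmod1_branch (x : R) : 0 <= x < 1 ->
  exists2 k : nat, (k < n)%N & k%:R <= n%:R * x < k%:R + 1.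
Proof.
move=> /andP[x0 x1]; have nx0 : 0 <= n%:R * x by rewrite mulr_ge0.
exists (Num.truncn (n%:R * x)).
  by rewrite truncn_lt_nat // -[X in _ < X]mulr1 ltr_pM2l // ltr0n.
by have := truncn_itv nx0; rewrite -natr1.
Qed.

Section preimage.
Variable A : set R.
Hypotheses (mA : measurable A) (A01 : A `<=` `[0, 1]).

Let B := A `&` `[0, 1[.
Let F (k : nat) := (fun x : R => n%:R * x - k%:R) @^-1` B.
Let Y := \bigcup_(k < n) F k.

Let B_itv y : B y -> 0 <= y < 1.
Proof. by case=> _; rewrite /= in_itv. Qed.

Let mB : measurable B.
Proof. by apply: measurableI => //; exact: measurable_itv. Qed.

Let mF k : measurable (F k).
Proof.
have : measurable_fun setT (fun x : R => n%:R * x - k%:R).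
  by apply: measurable_funB => //; exact: measurable_funM.
by move=> /(_ measurableT B mB); rewrite setTI.
Qed.

Let F_trivIset : trivIset setT F.
Proof.
have le_nat (x : R) (a b : nat) : 0 <= n%:R * x - a%:R -> n%:R * x - b%:R < 1 ->
    (a <= b)%N.
  rewrite subr_ge0 ltrBlDl => ha hb.
  by have := le_lt_trans ha hb; rewrite natr1 ltr_nat ltnS.
move=> i j _ _ [x [/B_itv /andP[i0 i1] /B_itv /andP[j0 j1]]].
by apply/eqP; rewrite eqn_leq (le_nat x i j) // (le_nat x j i).
Qed.

Let muF k : mu (F k) = ((n%:R^-1)%:E * mu B)%E.
Proof.
have n0 : 0 < n%:R :> R by rewrite ltr0n.
exact: (@lebesgue_measure_preimage_affine R _ (- k%:R) _ n0 mB).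
Qed.

Let muY : mu Y = mu B.
Proof.
have n0 : n%:R != 0 :> R by rewrite pnatr_eq0 -lt0n.
rewrite /Y bigcup_mkord measure_bigsetU //.
rewrite (eq_bigr (fun=> (n%:R^-1)%:E * mu B)%E); last by move=> k _; exact: muF.
rewrite -ge0_sume_distrl => [|_ _]; last by rewrite lee_fin invr_ge0.
by rewrite sumEFin sumr_const card_ord -[_^-1 *+ n]mulr_natr mulVf // mul1e.
Qed.

Let muB : mu B = mu A.
Proof.
suff AB1 : A `<=` B `|` [set 1].
  by have [_ ->] := lebesgue_measure_subU1 mB (@subIsetl _ A _) AB1.
move=> y Ay; have /andP[y0 y1] : 0 <= y <= 1.
  by have := A01 Ay; rewrite /= in_itv.
have [->|y1'] := eqVneq y 1; first by right.
by left; split => //; rewrite /= in_itv /= y0 lt_neqAle y1' y1.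
Qed.

Let Y_sub : Y `<=` `[0, 1] `&` mulmod1 n @^-1` A.
Proof.
move=> x [k /= kn Fkx]; have /andP[kx xk] := B_itv Fkx.
rewrite subr_ge0 in kx; rewrite ltrBlDl in xk.
have kn' : k%:R + 1 <= n%:R :> R by rewrite natr1 ler_nat.
have n0 : 0 < n%:R :> R by rewrite ltr0n.
split.
  rewrite /= in_itv /=; apply/andP; split.
  - by rewrite -(pmulr_rge0 _ n0) (le_trans _ kx).
  - by rewrite -(ler_pM2l n0) mulr1 ltW // (lt_le_trans xk kn').
by rewrite /= (@mulmod1E k) ?kx //; case: Fkx.
Qed.

Let sub_Y1 : `[0, 1] `&` mulmod1 n @^-1` A `<=` Y `|` [set 1].
Proof.
move=> x [/= x01 Ax]; have [->|x1] := eqVneq x 1; first by right.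
have /andP[x0 x1'] : 0 <= x <= 1 by rewrite in_itv in x01.
have [k kn hk] : exists2 k : nat, (k < n)%N & k%:R <= n%:R * x < k%:R + 1.
  by apply: mulmod1_branch; rewrite x0 lt_neqAle x1 x1'.
left; exists k => //; rewrite /F /= -(mulmod1E hk); split => //.
by rewrite /= in_itv; exact: mulmod1_ge0_lt1.
Qed.

Let mY : measurable Y.
Proof. by rewrite /Y bigcup_mkord; exact: bigsetU_measurable. Qed.

Lemma measurable_preimage_mulmod1 : measurable (`[0, 1] `&` mulmod1 n @^-1` A).
Proof. by have [] := lebesgue_measure_subU1 mY Y_sub sub_Y1. Qed.

Lemma lebesgue_measure_preimage_mulmod1 :
  mu (`[0, 1] `&` mulmod1 n @^-1` A) = mu A.
Proof.
by have [_ ->] := lebesgue_measure_subU1 mY Y_sub sub_Y1; rewrite muY muB.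
Qed.
End preimage.

Lemma mulmod1_preserves_leb : preserves_leb (@mulmod1 R n).
Proof. by move=> A mA A01; exact: lebesgue_measure_preimage_mulmod1. Qed.
End mulmod1.

Lemma tau5E (R : realType) : @tau5 R = mulmod1 5.
Proof. by []. Qed.

Lemma tau5_mul5 (R : realType) (x : R) : 0 <= x < 1 / 5 -> tau5 x = 5 * x.
Proof.
move=> /andP[x0 x5]; rewrite tau5E (@mulmod1E R 5 0) ?mulr0n ?subr0 //.
by rewrite add0r; apply/andP; split; lra.
Qed.

Lemma tau1_le_tau5_le_tau2 (R : realType) (x : R) :
  x \in `[0, 1] -> tau1 x <= tau5 x <= tau2 x.
Proof.
rewrite in_itv /= => /andP[x0 x1]; rewrite /tau1 /tau2.
have [x5|x5] := ltP x (1 / 5); last first.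
  by case: ltP => x3; case: ltP => x2; rewrite ?lexx //; lra.
rewrite tau5_mul5; last by apply/andP; split.
by case: ltP => x3; case: ltP => x2; apply/andP; split; lra.
Qed.

Section counterexample.
Variable R : realType.
Local Notation mu := (@lebesgue_measure R).

Let A : set R := `[1 / 5, 4 / 5].
Let S := `[0, 1] `&` @tau5 R @^-1` A.
Let I : set R := `[1 / 25, 4 / 25].
Let C := `[1 / 80, 1 / 20] `|` `[3 / 20, 3 / 16] `|` (S `\` I).

Let mA : measurable A. Proof. exact: measurable_itv. Qed.

Let A01 : A `<=` `[0, 1].
Proof.
by move=> y; rewrite /A /= !in_itv /= => /andP[? ?]; apply/andP; split; lra.
Qed.

Let muS : mu S = mu A.
Proof. exact: (@lebesgue_measure_preimage_mulmod1 R 5). Qed.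

Let mS : measurable S.
Proof. exact: (@measurable_preimage_mulmod1 R 5). Qed.

Let mI : measurable I. Proof. exact: measurable_itv. Qed.

Let mC : measurable C.
Proof.
apply: measurableU; last exact: measurableD.
by apply: measurableU; exact: measurable_itv.
Qed.

Let I_sub_S : I `<=` S.
Proof.
move=> x; rewrite /I /= in_itv /= => /andP[x1 x4].
split; first by rewrite /= in_itv /=; apply/andP; split; lra.
by rewrite /= tau5_mul5 /A /= ?in_itv /=; apply/andP; split; lra.
Qed.

Let C_hit x : x \in `[0, 1] -> A (tau1 x) \/ A (tau2 x) -> C x.
Proof.
rewrite in_itv /= => /andP[x0 x1]; rewrite /tau1 /tau2.
have [x5|x5] := ltP x (1 / 5); last first.
  case: ltP => x3; first by lra.
  case: ltP => x2; first by lra.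
  move=> Ax; have Sx : S x.
    by split; [rewrite /= in_itv /= x0 x1 | case: Ax].
  right; split => //.
  by rewrite /I /= in_itv /= => /andP[_]; lra.
case: ltP => x3; case: ltP => x2; rewrite /A /= !in_itv /= => -[] /andP[u v];
  first
  [ by lra
  | by left; left; rewrite /= in_itv /=; apply/andP; split; lra
  | by left; right; rewrite /= in_itv /=; apply/andP; split; lra ].
Qed.

Let muC : (mu C < mu A)%E.
Proof.
have len (a b : R) : a < b -> mu `[a, b] = (b - a)%:E.
  by move=> ab; rewrite lebesgue_measure_itv /= lte_fin ab -EFinD.
have muA : mu A = (3 / 5)%:E by rewrite len; [congr (_%:E) | ]; lra.
have muSI : mu (S `\` I) = (3 / 5 - 3 / 25)%:E.
  have Sfin : (mu S < +oo)%E by rewrite muS muA ltry.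
  rewrite measureD // setIidr //.
  rewrite -[X in (X - _)%E]/(mu S) -[X in (_ - X)%E]/(mu I).
  rewrite muS muA len; last by lra.
  by rewrite -EFinB; congr (_%:E); lra.
(* [measureU2] restated for [mu] itself, so that [len] can rewrite it. *)
have muU (X Y : set R) : measurable X -> measurable Y ->
    (mu (X `|` Y) <= mu X + mu Y)%E.
  by move=> mX mY; apply: measureU2.
rewrite muA; apply: le_lt_trans (muU _ _ _ _) _.
- by apply: measurableU; exact: measurable_itv.
- exact: measurableD.
apply: le_lt_trans (leeD (muU _ _ _ _) (lexx _)) _; try exact: measurable_itv.
by rewrite !len ?muSI -?EFinD ?lte_fin; lra.
Qed.

Lemma no_lebesgue_preserving_random_map :
  ~ (exists p : R -> R,
       measurable_fun (`[0, 1] : set R) p /\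
       (forall x, x \in `[0, 1] -> 0 <= p x <= 1) /\
       random_map_preserves_leb (@tau1 R) (@tau2 R) p).
Proof.
move=> [p [_ [p01 p_preserves]]].
have := random_map_integral_le_measure mu (measurable_itv `[0, 1]) mC p01 C_hit.
by rewrite -(p_preserves A mA A01) => /(lt_le_trans muC); rewrite ltxx.
Qed.
End counterexample.

Theorem mainTheorem6 (R : realType) :
  (forall x : R, x \in `[0, 1] -> tau1 x <= tau5 x <= tau2 x) /\
  preserves_leb (@tau5 R) /\
  ~ (exists p : R -> R,
       measurable_fun (`[0, 1] : set R) p /\
       (forall x, x \in `[0, 1] -> 0 <= p x <= 1) /\
       random_map_preserves_leb (@tau1 R) (@tau2 R) p).
Proof.
split; first exact: tau1_le_tau5_le_tau2.
split; last exact: no_lebesgue_preserving_random_map.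
by rewrite tau5E; exact: mulmod1_preserves_leb.
Qed.
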